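(* Let $\Lambda^*$ be the group of invertible elements of $\Lambda$. The set $U=\{[v_1,\dots,v_{m+2n}]\in\mathbf{E}: (v_i,v_i)\in\Lambda^*\text{ for }1\le i\le m,\ (v_{m+2j-1},v_{m+2j})\in\Lambda^*\text{ for }1\le j\le n\}$ is dense in $\mathbf{E}$: every polynomial function on $\mathbf{E}$ vanishing on $U$ is identically zero.
   Context: $\Lambda=\varinjlim\wedge(\mathbb{C}^N)$ is the infinite Grassmann algebra ($\mathbb{Z}_2$-graded, supercommutative). $V_{\mathbb{C}}$ is a complex superspace of superdimension $(m|2n)$ with nondegenerate even supersymmetric form and standard homogeneous basis $e_1,\dots,e_{m+2n}$ ($e_1,\dots,e_m$ even); $V=V_{\mathbb{C}}\otimes\Lambda$ with the $\Lambda$-bilinearly extended form. $\mathbf{E}=\mathrm{End}_\Lambda(V)_{\bar0}$; an element $A\in\mathbf{E}$ is written $A=[v_1,\dots,v_{m+2n}]$ where $v_j=Ae_j$ (so $v_j\in V_{\bar0}$ for $j\le m$ and $v_j\in V_{\bar1}$ for $j>m$). A polynomial function on $\mathbf{E}$ is a finite $\Lambda$-linear combination of monomials in the matrix coefficients $a_{ij}\in\Lambda$ of $A$ (defined by $Ae_j=\sum_ie_ia_{ij}$). *)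

From HB Require Import structures.
From mathcomp Require Import all_boot all_order all_algebra.
From mathcomp Require Import reals.
From mathcomp Require Import complex.
From Stdlib Require Lists.List.
Set Implicit Arguments. Unset Strict Implicit. Unset Printing Implicit Defensive.
Import Order.TTheory GRing.Theory Num.Theory.
Local Open Scope ring_scope.

(* The infinite Grassmann algebra  Lambda = lim_N  /\(C^N)  over C = R[i],   *)
(* Generators xi_0, xi_1, ... .  An element x is represented by its          *)
(* coefficient function  x : seq nat -> C,  where x S is the coefficient of  *)
(* the monomial xi_{s_1} ... xi_{s_k} for S = [:: s_1; ...; s_k] strictly    *)
(* increasing.  Elements of Lambda are those with x S = 0 unless S is        *)
(* strictly increasing, and involving only finitely many generators.         *)

Section Grassmann.
Variable R : realType.
Local Notation C := (R[i]).

Definition lam := seq nat -> C.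

Definition is_lam (x : lam) : Prop :=
  (forall S, ~~ sorted ltn S -> x S = 0) /\
  exists N : nat, forall S, x S != 0 -> all (fun s => s < N)%N S.

Definition lam_eq (x y : lam) : Prop := forall S, x S = y S.

Definition lam0 : lam := fun _ => 0.
Definition lam1 : lam := fun S => if S is [::] then 1 else 0.
Definition lam_add (x y : lam) : lam := fun S => x S + y S.

(* sign of the shuffle bringing (T ++ T') into increasing order:           *)
Definition shuffle_sign (T T' : seq nat) : C :=
  (-1) ^+ (\sum_(t <- T) count (fun t' => (t' < t)%N) T')%N.

Definition lam_mul (x y : lam) : lam := fun S =>
  if sorted ltn S then
    \sum_(b : (size S).-tuple bool)
       shuffle_sign (mask b S) (mask (map negb b) S)
       * x (mask b S) * y (mask (map negb b) S)
  else 0.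

Definition lam_prod (s : seq lam) : lam := foldr lam_mul lam1 s.
Definition lam_sum (s : seq lam) : lam := foldr lam_add lam0 s.

Definition lam_unit (x : lam) : Prop :=
  exists y, is_lam y /\ lam_eq (lam_mul x y) lam1 /\ lam_eq (lam_mul y x) lam1.

Definition lam_homog (p : bool) (x : lam) : Prop :=
  forall S, x S != 0 -> odd (size S) = p.

Definition lam_par (x : lam) : lam := fun S => (-1) ^+ size S * x S.

(* The superspace V_C of superdimension (m|2n), basis e_0,...,e_{m+2n-1}     *)
(* (0-indexed; e_0..e_{m-1} even), and the standard supersymmetric form:    *)
(*   (e_i, e_i) = 1 for i < m,                                              *)
(*   (e_{m+2j}, e_{m+2j+1}) = 1, (e_{m+2j+1}, e_{m+2j}) = -1 for j < n,       *)
(*   all other pairings 0.                                                   *)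

Variables m n : nat.
Local Notation d := (m + n.*2)%N.

Definition bpar (i : 'I_d) : bool := (m <= i)%N.

Definition form_coef (k l : 'I_d) : C :=
  if ((k < m)%N && (k == l :> nat)) then 1
  else if (m <= k)%N && (m <= l)%N then
    (if ~~ odd (k - m) && (l == k.+1 :> nat) then 1
     else if odd (k - m) && (k == l.+1 :> nat) then -1 else 0)
  else 0.

(* An element A of E = End_Lambda(V)_0 is given by its matrix coefficients
   a_{ij} in Lambda, A e_j = sum_i e_i a_{ij}; evenness of A means
   a_{ij} has parity p(i) + p(j). *)
Definition mat := 'I_d -> 'I_d -> lam.

Definition in_E (A : mat) : Prop :=
  forall i j, is_lam (A i j) /\ lam_homog (bpar i (+) bpar j) (A i j).

(* Lambda-bilinear extension of the form to V = V_C (x) Lambda, with scalars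
   on the right: for v = sum_k e_k a_k and w = sum_l e_l b_l,
   (v, w) = sum_{k,l} (e_k, e_l) * (par^{p(l)} a_k) * b_l,
   (moving a_k past e_l produces the parity automorphism). *)
Definition form (a b : 'I_d -> lam) : lam :=
  lam_sum [seq lam_mul (fun S => form_coef k l * (if bpar l then lam_par (a k) else a k) S)
                        (b l) | k <- enum 'I_d, l <- enum 'I_d].

Definition col (A : mat) (j : 'I_d) : 'I_d -> lam := fun i => A i j.

Definition in_U (A : mat) : Prop :=
  (forall i : 'I_d, (i < m)%N -> lam_unit (form (col A i) (col A i))) /\
  (forall (j : nat) (h1 : (m + j.*2 < d)%N) (h2 : ((m + j.*2).+1 < d)%N),
      lam_unit (form (col A (Ordinal h1)) (col A (Ordinal h2)))).

(* A polynomial is a list of terms (c, mono),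
   c in Lambda, mono a list of index pairs (i,j); its value at A is
   sum c * a_{i1 j1} * ... * a_{ik jk}. *)
Definition poly_fun := seq (lam * seq ('I_d * 'I_d)).

Definition poly_ok (P : poly_fun) : Prop := forall t, Stdlib.Lists.List.In t P -> is_lam t.1.

Definition poly_eval (P : poly_fun) (A : mat) : lam :=
  lam_sum [seq lam_mul t.1 (lam_prod [seq A ij.1 ij.2 | ij <- t.2]) | t <- P].

End Grassmann.

From Pilot Require Import Defs.
From HB Require Import structures.
From mathcomp Require Import all_boot all_order all_algebra.
From mathcomp Require Import reals.
From mathcomp Require Import complex.
From mathcomp Require Import ring.
From Stdlib Require Import FunctionalExtensionality.
Set Implicit Arguments. Unset Strict Implicit. Unset Printing Implicit Defensive.
Import Order.TTheory GRing.Theory Num.Theory.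
Local Open Scope ring_scope.

(* Shift A in E to A + t*1 with t in C; it stays in E, and every coefficient of
   P(A + t*1) is a polynomial in t.  The pairings (v_i, v_i) and
   (v_{m+2j-1}, v_{m+2j}) of the shifted columns are even elements of Lambda
   whose bodies (scalar parts) are monic quadratics in t, and an even element
   with nonzero body is invertible.  Hence A + t*1 lies in U unless t is one of
   the finitely many roots of the product Q of these quadratics.  For each
   coefficient p of P(A + t*1) the polynomial p Q then vanishes on all of C, so
   p = 0, and t = 0 gives P(A) = 0. *)

Lemma sumr_neq0_exists (K : nzRingType) (I : finType) (P : pred I) (F : I -> K) :
  \sum_(i | P i) F i != 0 -> exists2 i, P i & F i != 0.
Proof.
move=> sum_neq0.
case: (pickP (fun i => P i && (F i != 0))) => [i /andP[Pi Fi] | noF]; first by exists i.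
move: sum_neq0; rewrite big1 ?eqxx // => i Pi.
by move: (noF i); rewrite Pi => /negbFE/eqP.
Qed.

Section ComplementaryMasks.
Variables (S : seq nat) (b : seq bool).
Hypothesis size_b : size b = size S.

Lemma all_masks (p : pred nat) :
  all p (mask b S) -> all p (mask (map negb b) S) -> all p S.
Proof.
elim: S b size_b => [|s S' IH] [|c b'] //= [] /IH {}IH.
by case: c => /= [/andP[-> H1] H2 | H1 /andP[-> H2]]; rewrite IH.
Qed.

Lemma size_masks : (size (mask b S) + size (mask (map negb b) S))%N = size S.
Proof.
rewrite !size_mask ?size_map // count_map -size_b -(count_predC id b).
by congr (_ + _)%N; apply: eq_count.
Qed.

Lemma masks_disjoint t :
  uniq S -> t \in mask b S -> t \in mask (map negb b) S -> False.
Proof.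
elim: S b size_b => [|s S' IH] [|c b'] //= [] size_b' /andP[sS' uS'].
case: c => /=; rewrite ?in_cons.
  case/orP => [/eqP -> /mem_mask | ]; first by rewrite (negbTE sS').
  exact: IH.
move=> tb; case/orP => [/eqP ts | ]; last exact: IH.
by move: tb; rewrite ts => /mem_mask; rewrite (negbTE sS').
Qed.

End ComplementaryMasks.

Lemma size_mask_negb_lt (S : seq nat) (b : (size S).-tuple bool) :
  b != nseq_tuple (size S) false -> (size (mask (map negb b) S) < size S)%N.
Proof.
move=> b_neq0; have b_true : has id b.
  apply: contraNT b_neq0 => /hasPn b_false; apply/eqP/val_inj => /=.
  have /all_pred1P -> : all (pred1 false) b by apply/allP => c /b_false; case: c.
  by rewrite size_tuple.
have mask_gt0 : (0 < size (mask b S))%N.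
  by rewrite size_mask ?size_tuple // -has_count.
have := size_masks (size_tuple b); move: mask_gt0.
move: (size (mask b S)) (size (mask (map negb b) S)) => k k' k_gt0 <-.
by rewrite -[X in (X < _)%N]add0n ltn_add2r.
Qed.

Section Grassmann.
Variable R : realType.
Local Notation C := (R[i]).
Local Notation lam := (lam R).

Lemma shuffle_signC (T T' : seq nat) :
  (forall t, t \in T -> t \in T' -> False) -> ~~ odd (size T) ->
  shuffle_sign R T T' = shuffle_sign R T' T.
Proof.
move=> disjTT' evT; rewrite /shuffle_sign -signr_odd -[RHS]signr_odd; congr (_ ^+ _).
have count_sum (p : pred nat) s : count p s = (\sum_(x <- s) p x)%N.
  by elim: s => [|x s IH]; rewrite ?big_nil ?big_cons //= IH.
(* Every pair (t, t') of [T] x [T'] is inverted in exactly one of the two orders *)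
have inversions : (\sum_(t <- T) count (fun t' => t' < t) T'
                   + \sum_(t' <- T') count (fun t => t < t') T = size T * size T')%N.
  under eq_bigr do rewrite count_sum.
  under [X in (_ + X)%N]eq_bigr do rewrite count_sum.
  rewrite [X in (_ + X)%N]exchange_big -big_split /=.
  rewrite big_seq (eq_bigr (fun _ => size T')); last first.
    move=> t tT; rewrite -big_split /= -sum1_size big_seq [RHS]big_seq.
    apply: eq_bigr => t' t'T'.
    by case: (ltngtP t' t) => //= tt'; case: (disjTT' t); rewrite // -tt'.
  by rewrite -big_seq; elim: (T) => [|x T'' IH]; rewrite ?big_nil ?big_cons //= IH.
move/(congr1 odd): inversions; rewrite oddD oddM (negbTE evT) /=.
by case: (odd _); case: (odd _).
Qed.

Lemma lam_sumE (s : seq lam) S : lam_sum s S = \sum_(x <- s) x S.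
Proof. by elim: s => [|x s IH]; rewrite ?big_nil // big_cons /= /lam_add -IH. Qed.

Lemma lam_mul_nil (x y : lam) : lam_mul x y [::] = x [::] * y [::].
Proof.
rewrite /lam_mul /=; under eq_bigr do rewrite !mask0.
by rewrite sumr_const card_tuple /= /shuffle_sign big_nil expr0 mul1r.
Qed.

Lemma lam_mulE_body (x y : lam) S : sorted ltn S ->
  lam_mul x y S = x [::] * y S +
    \sum_(b : (size S).-tuple bool | b != nseq_tuple (size S) false)
      shuffle_sign R (mask b S) (mask (map negb b) S)
        * x (mask b S) * y (mask (map negb b) S).
Proof.
move=> sS; rewrite /lam_mul sS (bigD1 (nseq_tuple (size S) false)) //=.
by rewrite mask_false map_nseq /= mask_true // /shuffle_sign big_nil expr0 mul1r.
Qed.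

Lemma lam_mul0l (x y : lam) : lam_eq x (lam0 R) -> lam_eq (lam_mul x y) (lam0 R).
Proof.
move=> x0 S; rewrite /lam_mul; case: ifP => // _.
by rewrite big1 // => b _; rewrite x0 mulr0 mul0r.
Qed.

Lemma lam_mul_even_comm (x y : lam) :
  lam_homog false x -> lam_eq (lam_mul x y) (lam_mul y x).
Proof.
move=> x_even S; rewrite /lam_mul; case: ifP => // sS.
have uS : uniq S by move: sS; rewrite ltn_sorted_uniq_leq => /andP[].
pose flip (b : (size S).-tuple bool) := map_tuple negb b.
have flipK : involutive flip by move=> b; apply: val_inj; rewrite /= (mapK negbK).
rewrite (reindex_inj (inv_inj flipK)); apply: eq_bigr => b _ /=; rewrite (mapK negbK).
have [->|x_neq0] := eqVneq (x (mask (map negb b) S)) 0; first by rewrite !mulr0 mul0r.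
rewrite (@shuffle_signC (mask (map negb b) S)) ?(x_even _ x_neq0) //; last first.
  by move=> t t_neg t_pos; apply: (masks_disjoint (size_tuple b) uS t_pos t_neg).
by rewrite -!mulrA [x _ * _]mulrC.
Qed.

Lemma is_lam_ext (x y : lam) : lam_eq x y -> is_lam x -> is_lam y.
Proof.
move=> exy [x_sorted [N xN]]; split; first by move=> S /x_sorted; rewrite exy.
by exists N => S; rewrite -exy; apply: xN.
Qed.

Lemma is_lam0 : is_lam (lam0 R).
Proof. by split => //; exists 0%N => S; rewrite eqxx. Qed.

Lemma is_lam1 : is_lam (lam1 R).
Proof. by split; [case | exists 0%N => -[|a l] //=; rewrite eqxx]. Qed.

Lemma is_lam_add (x y : lam) : is_lam x -> is_lam y -> is_lam (lam_add x y).
Proof.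
move=> [x_sorted [Nx xN]] [y_sorted [Ny yN]]; split.
  by move=> S nsS; rewrite /lam_add x_sorted ?y_sorted ?addr0.
exists (maxn Nx Ny) => S; rewrite /lam_add.
have [-> | /xN xS _] := eqVneq (x S) 0.
  rewrite add0r => /yN yS.
  by apply: sub_all yS => s /= /leq_trans; apply; rewrite leq_maxr.
by apply: sub_all xS => s /= /leq_trans; apply; rewrite leq_maxl.
Qed.

Lemma is_lam_mul (x y : lam) : is_lam x -> is_lam y -> is_lam (lam_mul x y).
Proof.
move=> [x_sorted [Nx xN]] [y_sorted [Ny yN]]; split.
  by move=> S nsS; rewrite /lam_mul (negbTE nsS).
exists (maxn Nx Ny) => S; rewrite /lam_mul; case: ifP => [_|]; last by rewrite eqxx.
case/sumr_neq0_exists => b _; rewrite !mulf_eq0 !negb_or => /andP[/andP[_ /xN xS] /yN yS].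
apply: (all_masks (size_tuple b)).
  by apply: sub_all xS => s /= /leq_trans; apply; rewrite leq_maxl.
by apply: sub_all yS => s /= /leq_trans; apply; rewrite leq_maxr.
Qed.

Lemma is_lam_scale (c : seq nat -> C) (x : lam) : is_lam x -> is_lam (fun S => c S * x S).
Proof.
move=> [x_sorted [N xN]]; split; first by move=> S /x_sorted ->; rewrite mulr0.
by exists N => S; rewrite mulf_eq0 negb_or => /andP[_ /xN].
Qed.

Lemma is_lam_par (x : lam) : is_lam x -> is_lam (lam_par x).
Proof. exact: is_lam_scale. Qed.

Lemma is_lam_sum (I : Type) (r : seq I) (F : I -> lam) :
  (forall i, is_lam (F i)) -> is_lam (fun S => \sum_(i <- r) F i S).
Proof.
move=> F_lam; elim: r => [|i r IH].
  by apply: is_lam_ext is_lam0 => S; rewrite big_nil.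
by apply: is_lam_ext (is_lam_add (F_lam i) IH) => S; rewrite big_cons.
Qed.

Lemma lam_homog_ext p (x y : lam) : lam_eq x y -> lam_homog p x -> lam_homog p y.
Proof. by move=> exy x_p S; rewrite -exy; apply: x_p. Qed.

Lemma lam_homog0 p : lam_homog p (lam0 R).
Proof. by move=> S; rewrite eqxx. Qed.

Lemma lam_homog1 : lam_homog false (lam1 R).
Proof. by case=> [|a l] //=; rewrite eqxx. Qed.

Lemma lam_homog_add p (x y : lam) :
  lam_homog p x -> lam_homog p y -> lam_homog p (lam_add x y).
Proof.
move=> x_p y_p S; rewrite /lam_add.
have [-> | x_neq0 _] := eqVneq (x S) 0; [rewrite add0r; exact: y_p | exact: x_p].
Qed.

Lemma lam_homog_mul p q (x y : lam) :
  lam_homog p x -> lam_homog q y -> lam_homog (p (+) q) (lam_mul x y).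
Proof.
move=> x_p y_q S; rewrite /lam_mul; case: ifP => [_|]; last by rewrite eqxx.
case/sumr_neq0_exists => b _; rewrite !mulf_eq0 !negb_or => /andP[/andP[_ /x_p xS] /y_q yS].
by rewrite -(size_masks (size_tuple b)) oddD xS yS.
Qed.

Lemma lam_homog_scale p (c : seq nat -> C) (x : lam) :
  lam_homog p x -> lam_homog p (fun S => c S * x S).
Proof. by move=> x_p S; rewrite mulf_eq0 negb_or => /andP[_ /x_p]. Qed.

Lemma lam_homog_par p (x : lam) : lam_homog p x -> lam_homog p (lam_par x).
Proof. exact: lam_homog_scale. Qed.

Lemma lam_homog_sum p (I : Type) (r : seq I) (F : I -> lam) :
  (forall i, lam_homog p (F i)) -> lam_homog p (fun S => \sum_(i <- r) F i S).
Proof.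
move=> F_p; elim: r => [|i r IH].
  by apply: lam_homog_ext (lam_homog0 p) => S; rewrite big_nil.
by apply: lam_homog_ext (lam_homog_add (F_p i) IH) => S; rewrite big_cons.
Qed.

Section Inverse.
Variable x : lam.

(* Solves [(x y)_S = 1_S] for [y_S]; the other coefficients of [y] it needs are
   indexed by proper subsequences of [S], and [k] is fuel exceeding [size S]. *)
Fixpoint inv_rec (k : nat) (S : seq nat) : C :=
  if k is k'.+1 then
    if sorted ltn S then (x [::])^-1 * (lam1 R S -
      \sum_(b : (size S).-tuple bool | b != nseq_tuple (size S) false)
        shuffle_sign R (mask b S) (mask (map negb b) S) * x (mask b S)
          * inv_rec k' (mask (map negb b) S))
    else 0
  else 0.

Lemma inv_rec_fuel k1 k2 S :
  (size S < k1)%N -> (size S < k2)%N -> inv_rec k1 S = inv_rec k2 S.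
Proof.
elim: k1 k2 S => [|k1 IH] [|k2] S //= S_k1 S_k2.
case: ifP => // _; congr (_ * (_ - _)); apply: eq_bigr => b b_neq0; congr (_ * _).
by apply: IH; apply: leq_trans (size_mask_negb_lt b_neq0) _.
Qed.

Definition lam_inv : lam := fun S => inv_rec (size S).+1 S.

Lemma lam_mul_inv : x [::] != 0 -> lam_eq (lam_mul x lam_inv) (lam1 R).
Proof.
move=> x0_neq0 S; case sS: (sorted ltn S); last by rewrite /lam_mul sS; case: S sS.
rewrite lam_mulE_body // {1}/lam_inv /= sS mulrA mulfV // mul1r.
rewrite [X in _ - _ + X](eq_bigr (fun b : (size S).-tuple bool =>
  shuffle_sign R (mask b S) (mask (map negb b) S) * x (mask b S)
    * inv_rec (size S) (mask (map negb b) S))) ?subrK //.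
move=> b b_neq0; congr (_ * _); apply: inv_rec_fuel => //.
exact: size_mask_negb_lt b_neq0.
Qed.

Lemma is_lam_inv : is_lam x -> is_lam lam_inv.
Proof.
move=> [_ [N xN]]; split; first by move=> S nsS; rewrite /lam_inv /= (negbTE nsS).
exists N => S; rewrite /lam_inv; move: (size S).+1 => k.
elim: k S => [|k IH] S' /=; first by rewrite eqxx.
case: ifP => [sS'|]; last by rewrite eqxx.
rewrite mulf_eq0 negb_or => /andP[_].
have [-> | ] := eqVneq (lam1 R S') 0; last by case: (S') sS' => [|a l] //=; rewrite eqxx.
rewrite sub0r oppr_eq0 => /sumr_neq0_exists[b _].
rewrite !mulf_eq0 !negb_or => /andP[/andP[_ /xN xS'] /IH yS'].
exact: (all_masks (size_tuple b) xS' yS').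
Qed.

End Inverse.

Lemma lam_unit_even (x : lam) :
  is_lam x -> lam_homog false x -> x [::] != 0 -> lam_unit x.
Proof.
move=> x_lam x_even x0_neq0; exists (lam_inv x); split; last split.
- exact: is_lam_inv.
- exact: lam_mul_inv.
- by move=> S; rewrite -lam_mul_even_comm //; apply: lam_mul_inv.
Qed.

End Grassmann.

Section SuperForm.
Variables (R : realType) (m n : nat).
Local Notation C := (R[i]).
Local Notation lam := (lam R).
Local Notation d := (m + n.*2)%N.

Lemma formE (a b : 'I_d -> lam) S : Defs.form a b S =
  \sum_(k < d) \sum_(l < d)
    lam_mul (fun S => form_coef R k l * (if bpar l then lam_par (a k) else a k) S) (b l) S.
Proof.
rewrite /Defs.form lam_sumE big_allpairs_dep /= big_enum; apply: eq_bigr => k _.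
by rewrite big_enum.
Qed.

Lemma form_coef_bpar (k l : 'I_d) : form_coef R k l != 0 -> bpar k = bpar l.
Proof.
rewrite /form_coef /bpar; case: ifP => [/andP[_ /eqP/val_inj -> //]|_].
by case: ifP => [/andP[-> ->] //|_]; rewrite eqxx.
Qed.

Lemma is_lam_form (a b : 'I_d -> lam) :
  (forall k, is_lam (a k)) -> (forall l, is_lam (b l)) -> is_lam (Defs.form a b).
Proof.
move=> a_lam b_lam; apply: is_lam_ext (fun S => esym (formE a b S)) _.
apply: is_lam_sum => k; apply: is_lam_sum => l; apply: is_lam_mul => //.
by apply: (is_lam_scale (fun _ => _)); case: (bpar l); [apply: is_lam_par|].
Qed.

Lemma lam_homog_form pa pb (a b : 'I_d -> lam) :
  (forall k, lam_homog (bpar k (+) pa) (a k)) ->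
  (forall l, lam_homog (bpar l (+) pb) (b l)) ->
  lam_homog (pa (+) pb) (Defs.form a b).
Proof.
move=> a_homog b_homog; apply: lam_homog_ext (fun S => esym (formE a b S)) _.
apply: lam_homog_sum => k; apply: lam_homog_sum => l.
have [c0 | /form_coef_bpar kl] := eqVneq (form_coef R k l) 0.
  by move=> S; rewrite lam_mul0l ?eqxx // => S'; rewrite c0 mul0r.
have -> : pa (+) pb = (bpar k (+) pa) (+) (bpar l (+) pb).
  by rewrite kl; case: (bpar l); case: (pa); case: (pb).
apply: lam_homog_mul => //; apply: (lam_homog_scale (fun _ => _)).
by case: (bpar l); [apply: lam_homog_par|]; apply: a_homog.
Qed.

Definition bform (u v : 'I_d -> C) : C :=
  \sum_(k < d) \sum_(l < d) form_coef R k l * u k * v l.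

Lemma form_body (a b : 'I_d -> lam) :
  Defs.form a b [::] = bform (fun k => a k [::]) (fun l => b l [::]).
Proof.
rewrite formE; apply: eq_bigr => k _; apply: eq_bigr => l _.
by rewrite lam_mul_nil; case: (bpar l); rewrite /lam_par ?expr0 ?mul1r.
Qed.

Definition shift_poly (u v : 'I_d -> C) (k l : 'I_d) : {poly C} :=
  (form_coef R k l)%:P * 'X^2
  + (bform (fun i => (i == k)%:R) v + bform u (fun j => (j == l)%:R))%:P * 'X
  + (bform u v)%:P.

Lemma bform_shift (u v : 'I_d -> C) (k l : 'I_d) (t : C) :
  bform (fun i => u i + t * (i == k)%:R) (fun j => v j + t * (j == l)%:R)
  = (shift_poly u v k l).[t].
Proof.
have delta_sum (F : 'I_d -> C) (k0 : 'I_d) : \sum_(i < d) F i * (i == k0)%:R = F k0.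
  rewrite (bigD1 k0) //= eqxx mulr1 big1 ?addr0 // => i /negbTE ->.
  by rewrite mulr0.
have bform_delta : bform (fun i => (i == k)%:R) (fun j => (j == l)%:R) = form_coef R k l.
  by rewrite /bform; under eq_bigr do rewrite delta_sum; apply: delta_sum.
have expand i j : form_coef R i j * (u i + t * (i == k)%:R) * (v j + t * (j == l)%:R)
    = form_coef R i j * (i == k)%:R * (j == l)%:R * t ^+ 2
      + form_coef R i j * (i == k)%:R * v j * t + form_coef R i j * u i * (j == l)%:R * t
      + form_coef R i j * u i * v j.
  by ring.
rewrite /shift_poly !hornerE -bform_delta /bform.
under eq_bigr do under eq_bigr do rewrite expand.
under eq_bigr do rewrite !big_split /= -!mulr_suml.
rewrite !big_split /= -!mulr_suml.
by rewrite expr2 mulrA mulrDl !addrA.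
Qed.

Definition shift (A : mat R m n) (t : C) : mat R m n :=
  fun i j S => A i j S + t * (i == j)%:R * lam1 R S.

Lemma shift0 (A : mat R m n) : shift A 0 = A.
Proof. by do 3 apply: functional_extensionality => ?; rewrite /shift !mul0r addr0. Qed.

Lemma in_E_shift (A : mat R m n) t : in_E A -> in_E (shift A t).
Proof.
move=> A_E i j; have [A_lam A_homog] := A_E i j; split.
  exact: is_lam_add A_lam (is_lam_scale (fun _ => _) (is_lam1 R)).
move: A_homog; have [<- | ij] := eqVneq i j => A_homog.
  rewrite addbb in A_homog *; apply: lam_homog_add A_homog _.
  by apply: (lam_homog_scale (fun _ => _)); apply: lam_homog1.
by apply: lam_homog_ext A_homog => S; rewrite /shift (negbTE ij) mulr0 mul0r addr0.
Qed.

Definition pairing_poly (A : mat R m n) (k l : 'I_d) : {poly C} :=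
  shift_poly (fun i => A i k [::]) (fun j => A j l [::]) k l.

Lemma form_shift_body (A : mat R m n) t k l :
  Defs.form (Defs.col (shift A t) k) (Defs.col (shift A t) l) [::]
  = (pairing_poly A k l).[t].
Proof.
rewrite form_body -bform_shift /Defs.col /shift /=.
by congr bform; apply: functional_extensionality => ?; rewrite mulr1.
Qed.

Lemma pairing_poly_neq0 (A : mat R m n) k l :
  form_coef R k l != 0 -> pairing_poly A k l != 0.
Proof.
apply: contraNneq => /(congr1 (fun p : {poly C} => p`_2)).
rewrite coef0 /pairing_poly /shift_poly !coefD coefCM coefCM coefXn coefX coefC /=.
by rewrite mulr1 mulr0 !addr0 => ->.
Qed.

Lemma lam_unit_pairing (A : mat R m n) t (k l : 'I_d) :
  in_E A -> bpar k = bpar l -> (pairing_poly A k l).[t] != 0 ->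
  lam_unit (Defs.form (Defs.col (shift A t) k) (Defs.col (shift A t) l)).
Proof.
move=> A_E kl body_neq0; have At_E := in_E_shift t A_E.
apply: lam_unit_even; last by rewrite form_shift_body.
  by apply: is_lam_form => i; [case: (At_E i k) | case: (At_E i l)].
rewrite -(addbb (bpar k)) {2}kl.
by apply: lam_homog_form => i; [case: (At_E i k) | case: (At_E i l)].
Qed.

Lemma form_coef_diag (i : 'I_d) : (i < m)%N -> form_coef R i i = 1.
Proof. by rewrite /form_coef => ->; rewrite eqxx. Qed.

Lemma form_coef_pair j (j_d : (m + j.*2 < d)%N) (j'_d : ((m + j.*2).+1 < d)%N) :
  form_coef R (Ordinal j_d) (Ordinal j'_d) = 1.
Proof.
have m_j : (m <= m + j.*2)%N by apply: leq_addr.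
rewrite /form_coef /= addKn odd_double (ltn_eqF (ltnSn _)) ltnNge m_j /=.
by rewrite (leqW m_j) eqxx.
Qed.

Definition U_poly (A : mat R m n) : {poly C} :=
  \prod_(k < d) \prod_(l < d | form_coef R k l == 1) pairing_poly A k l.

Lemma U_poly_neq0 (A : mat R m n) : U_poly A != 0.
Proof.
apply/prodf_neq0 => k _; apply/prodf_neq0 => l /eqP kl1.
by apply: pairing_poly_neq0; rewrite kl1 oner_eq0.
Qed.

Lemma in_U_shift (A : mat R m n) t : in_E A -> (U_poly A).[t] != 0 -> in_U (shift A t).
Proof.
move=> A_E; rewrite horner_prod => /prodf_neq0 U_t.
have unit_pair k l : form_coef R k l = 1 ->
    lam_unit (Defs.form (Defs.col (shift A t) k) (Defs.col (shift A t) l)).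
  move=> kl1; apply: lam_unit_pairing => //.
    by apply: form_coef_bpar; rewrite kl1 oner_eq0.
  by move: (U_t k isT); rewrite horner_prod => /prodf_neq0; apply; rewrite kl1.
by split=> [i i_m | j j_d j'_d]; apply: unit_pair;
  [exact: form_coef_diag | exact: form_coef_pair].
Qed.

End SuperForm.

Lemma poly_vanishing_eq0 (F : numDomainType) (p : {poly F}) :
  (forall t, p.[t] = 0) -> p = 0.
Proof.
move=> p0; apply: (@roots_geq_poly_eq0 _ p [seq i%:R | i <- iota 0 (size p)]).
- by apply/allP => x _; rewrite /root p0.
- by rewrite map_inj_uniq ?iota_uniq // => i j /eqP; rewrite eqr_nat => /eqP.
- by rewrite size_map size_iota.
Qed.

Section PolynomialFamilies.
Variable R : realType.
Local Notation C := (R[i]).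
Local Notation lam := (lam R).

Definition lam_polynomial (f : C -> lam) :=
  exists pf : seq nat -> {poly C}, forall t S, f t S = (pf S).[t].

Lemma lam_polynomial_const (x : lam) : lam_polynomial (fun _ => x).
Proof. by exists (fun S => (x S)%:P) => t S; rewrite hornerC. Qed.

Lemma lam_polynomial_add f g : lam_polynomial f -> lam_polynomial g ->
  lam_polynomial (fun t => lam_add (f t) (g t)).
Proof.
move=> [pf f_pf] [pg g_pg]; exists (fun S => pf S + pg S) => t S.
by rewrite hornerD /lam_add f_pf g_pg.
Qed.

Lemma lam_polynomial_mul f g : lam_polynomial f -> lam_polynomial g ->
  lam_polynomial (fun t => lam_mul (f t) (g t)).
Proof.
move=> [pf f_pf] [pg g_pg].
exists (fun S => if sorted ltn S then \sum_(b : (size S).-tuple bool)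
   (shuffle_sign R (mask b S) (mask (map negb b) S))%:P
     * pf (mask b S) * pg (mask (map negb b) S) else 0) => t S.
rewrite /lam_mul; case: ifP => _; last by rewrite horner0.
rewrite horner_sum; apply: eq_bigr => b _.
by rewrite !hornerM hornerC f_pf g_pg.
Qed.

Lemma lam_polynomial_sum (I : Type) (F : I -> C -> lam) (s : seq I) :
  (forall i, lam_polynomial (F i)) ->
  lam_polynomial (fun t => lam_sum [seq F i t | i <- s]).
Proof.
move=> F_poly; elim: s => [|i s IH]; first exact: lam_polynomial_const.
exact: lam_polynomial_add.
Qed.

Lemma lam_polynomial_prod (I : Type) (F : I -> C -> lam) (s : seq I) :
  (forall i, lam_polynomial (F i)) ->
  lam_polynomial (fun t => lam_prod [seq F i t | i <- s]).
Proof.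
move=> F_poly; elim: s => [|i s IH]; first exact: lam_polynomial_const.
exact: lam_polynomial_mul.
Qed.

Variables m n : nat.

Lemma lam_polynomial_shift (A : mat R m n) i j : lam_polynomial (fun t => shift A t i j).
Proof.
exists (fun S => (A i j S)%:P + 'X * ((i == j)%:R * lam1 R S)%:P) => t S.
by rewrite /shift hornerD hornerC hornerM hornerX hornerC mulrA.
Qed.

Lemma lam_polynomial_eval (P : poly_fun R m n) (A : mat R m n) :
  lam_polynomial (fun t => poly_eval P (shift A t)).
Proof.
apply: lam_polynomial_sum => term; apply: lam_polynomial_mul.
  exact: lam_polynomial_const.
by apply: lam_polynomial_prod => ij; apply: lam_polynomial_shift.
Qed.

End PolynomialFamilies.

(* The argument is coefficientwise in [Lambda]. *)
Theorem lemma6p6 (R : realType) (m n : nat) (P : poly_fun R m n) :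
  poly_ok P ->
  (forall A : mat R m n, in_E A -> in_U A -> lam_eq (poly_eval P A) (lam0 R)) ->
  forall A : mat R m n, in_E A -> lam_eq (poly_eval P A) (lam0 R).
Proof.
move=> _ P0_on_U A A_E S.
have [pf Pf] := lam_polynomial_eval P A.
have pfU0 : pf S * U_poly A = 0.
  apply: poly_vanishing_eq0 => t; rewrite hornerM.
  have [-> | /(in_U_shift A_E) At_U] := eqVneq (U_poly A).[t] 0; first by rewrite mulr0.
  by rewrite -Pf (P0_on_U _ (in_E_shift t A_E) At_U S) mul0r.
have pf0 : pf S = 0.
  by move/eqP: pfU0; rewrite mulf_eq0 (negbTE (U_poly_neq0 A)) orbF => /eqP.
by rewrite -(shift0 A) Pf pf0 horner0.
Qed.
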